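(* Let $$R=\begin{pmatrix} 1 & -2 \\ 1 & 1 \end{pmatrix}.$$ There exists a driving function $f:[0,\infty)\to\mathbb{R}^2$ for which the Skorokhod problem with matrix $R$ has two distinct solutions $(g,m)$ and $(\overline g,\overline m)$ with $g\neq \overline g$; that is, both satisfy $g(t)=f(t)+Rm(t)$ and $\overline g(t)=f(t)+R\overline m(t)$ for all $t\ge 0$ together with the other conditions of the Skorokhod problem.
   Context: For $b=(b_1,b_2)\in\mathbb{R}^2$ write $b\ge 0$ if $b_1\ge 0$ and $b_2\ge 0$, and let $D=\{b\in\mathbb{R}^2: b\ge 0\}$. A driving function is a continuous function $f:[0,\infty)\to\mathbb{R}^2$ with $f(0)\ge 0$. Given a real $2\times 2$ matrix $R$ and a driving function $f$, a solution of the Skorokhod problem is a pair $(g,m)$ where (1) $g:[0,\infty)\to D$ is continuous; (2) $m=(m_1,m_2):[0,\infty)\to\mathbb{R}^2$ is continuous with $m(0)=0$ and each $m_j$ non-decreasing; (3) $g(t)=f(t)+Rm(t)$ for all $t\ge 0$ (the Skorokhod equation); and (4) for $j=1,2$, $m_j$ increases only when $g_j=0$, i.e. $\int_0^\infty g_j(t)\,dm_j(t)=0$. *)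

From Stdlib Require Import Reals.
Open Scope R_scope.

(* Vectors of R^2 are represented by their two coordinate functions.
   Functions are defined on all of R but only their values on [0,oo) matter. *)

Definition cont_on_nonneg (h : R -> R) : Prop :=
  forall t, 0 <= t -> limit1_in h (fun x => 0 <= x) (h t) t.

Definition driving (f1 f2 : R -> R) : Prop :=
  cont_on_nonneg f1 /\ cont_on_nonneg f2 /\ 0 <= f1 0 /\ 0 <= f2 0.

Definition nondecr_on_nonneg (h : R -> R) : Prop :=
  forall s t, 0 <= s -> s <= t -> h s <= h t.

(* "m increases only when g = 0": m is constant on every interval [s,t]
   of [0,oo) on which g stays strictly positive (equivalently, for g >= 0
   continuous and m continuous non-decreasing, int_0^oo g dm = 0). *)
Definition increases_only_at_zero (g m : R -> R) : Prop :=
  forall s t, 0 <= s -> s <= t ->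
    (forall u, s <= u <= t -> 0 < g u) -> m s = m t.

Definition skorokhod_solution (r11 r12 r21 r22 : R) (f1 f2 g1 g2 m1 m2 : R -> R) : Prop :=
  cont_on_nonneg g1 /\ cont_on_nonneg g2 /\
  (forall t, 0 <= t -> 0 <= g1 t /\ 0 <= g2 t) /\
  cont_on_nonneg m1 /\ cont_on_nonneg m2 /\
  m1 0 = 0 /\ m2 0 = 0 /\
  nondecr_on_nonneg m1 /\ nondecr_on_nonneg m2 /\
  (forall t, 0 <= t ->
     g1 t = f1 t + (r11 * m1 t + r12 * m2 t) /\
     g2 t = f2 t + (r21 * m1 t + r22 * m2 t)) /\
  increases_only_at_zero g1 m1 /\ increases_only_at_zero g2 m2.

From Stdlib Require Import Reals Lra Lia ZArith.
Open Scope R_scope.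

(* The driving function is self-similar, f (2 t) = 2 f t, and is determined by a
   piecewise-linear profile on [1, 2].  Over this profile there are two different
   piecewise-linear solutions (g, m) of the Skorokhod problem on [1, 2] with
   m 2 = 2 m 1.  Extending every profile h by h t = 2^k h (t / 2^k) on [2^k, 2^(k+1)]
   preserves continuity, monotonicity, the Skorokhod equation and complementarity,
   and all extended functions are O(t) at 0, so they are continuous at t = 0 with
   value 0.  The two solutions differ at every scale, hence arbitrarily close to
   t = 0, where the infinitely many scales accumulate. *)

Lemma powerRZ2_pos k : 0 < powerRZ 2 k.
Proof. apply powerRZ_lt; lra. Qed.

Lemma powerRZ2_succ k : powerRZ 2 (k + 1) = 2 * powerRZ 2 k.
Proof. rewrite powerRZ_add by lra; simpl; ring. Qed.

Lemma powerRZ2_lt a b : (a < b)%Z -> powerRZ 2 a < powerRZ 2 b.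
Proof.
  intros Hab; rewrite !powerRZ_Rpower by lra.
  apply Rpower_lt; [lra | now apply IZR_lt].
Qed.

Lemma powerRZ2_le a b : (a <= b)%Z -> powerRZ 2 a <= powerRZ 2 b.
Proof.
  intros Hab; rewrite !powerRZ_Rpower by lra.
  apply Rle_Rpower; [lra | now apply IZR_le].
Qed.

Definition dyadic_index (t : R) : Z := (up (ln t / ln 2) - 1)%Z.

Lemma dyadic_index_spec t : 0 < t ->
  powerRZ 2 (dyadic_index t) <= t < powerRZ 2 (dyadic_index t + 1).
Proof.
  intros Ht; unfold dyadic_index.
  set (y := ln t / ln 2).
  assert (Hy : Rpower 2 y = t).
  { unfold Rpower, y; replace (ln t / ln 2 * ln 2) with (ln t).
    - now apply exp_ln.
    - field; pose proof ln_lt_2; lra. }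
  destruct (archimed y) as [Hup1 Hup2].
  rewrite !powerRZ_Rpower, Z.sub_add, minus_IZR by lra.
  rewrite <- Hy; split.
  - apply Rle_Rpower; lra.
  - apply Rpower_lt; lra.
Qed.

Definition block (k : Z) (t : R) : Prop := powerRZ 2 k <= t <= powerRZ 2 (k + 1).

Definition rescale (k : Z) (F : R -> R) (t : R) : R := powerRZ 2 k * F (t / powerRZ 2 k).

Definition dyadic_ext (F : R -> R) (t : R) : R :=
  if Rle_dec t 0 then 0 else rescale (dyadic_index t) F t.

Lemma block_pos k t : block k t -> 0 < t.
Proof. intros [H _]; pose proof (powerRZ2_pos k); lra. Qed.

Lemma block_div k t : block k t -> 1 <= t / powerRZ 2 k <= 2.
Proof.
  unfold block; rewrite powerRZ2_succ; pose proof (powerRZ2_pos k) as Hk.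
  intros Ht; split; [apply Rmult_le_reg_r with (powerRZ 2 k) .. ];
    unfold Rdiv; rewrite ?Rmult_assoc, ?Rinv_l; lra.
Qed.

Lemma block_dyadic_index t : 0 < t -> block (dyadic_index t) t.
Proof. intros Ht; pose proof (dyadic_index_spec t Ht); unfold block; lra. Qed.

Lemma dyadic_ext_pos F t : 0 < t -> dyadic_ext F t = rescale (dyadic_index t) F t.
Proof. intros Ht; unfold dyadic_ext; destruct (Rle_dec t 0); [lra | easy]. Qed.

Lemma dyadic_ext_nonpos F t : t <= 0 -> dyadic_ext F t = 0.
Proof. intros Ht; unfold dyadic_ext; destruct (Rle_dec t 0); [easy | lra]. Qed.

Lemma dyadic_ext_block F k t : F 2 = 2 * F 1 -> block k t -> dyadic_ext F t = rescale k F t.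
Proof.
  intros HF Hk; pose proof (block_pos k t Hk) as Ht.
  rewrite dyadic_ext_pos by easy.
  pose proof (dyadic_index_spec t Ht) as Hn; set (n := dyadic_index t) in *.
  destruct Hk as [Hk1 Hk2].
  destruct (Z.lt_trichotomy n k) as [Hlt | [-> | Hgt]]; [| easy |].
  - pose proof (powerRZ2_le (n + 1) k ltac:(lia)); lra.
  - destruct (Z.eq_dec n (k + 1)) as [-> | Hne].
    + assert (Et : t = powerRZ 2 (k + 1)) by lra.
      unfold rescale; rewrite Et, powerRZ2_succ; pose proof (powerRZ2_pos k).
      replace (2 * powerRZ 2 k / (2 * powerRZ 2 k)) with 1 by (field; lra).
      replace (2 * powerRZ 2 k / powerRZ 2 k) with 2 by (field; lra).
      rewrite HF; ring.
    + pose proof (powerRZ2_lt (k + 1) n ltac:(lia)); lra.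
Qed.

Lemma dyadic_ext_extends F x : F 2 = 2 * F 1 -> 1 <= x <= 2 -> dyadic_ext F x = F x.
Proof.
  intros HF Hx; rewrite (dyadic_ext_block F 0 x HF); unfold block, rescale; simpl.
  - rewrite Rdiv_1_r; ring.
  - lra.
Qed.

Lemma continuity_pt_limit1_in g S t : continuity_pt g t -> limit1_in g S (g t) t.
Proof.
  intros Hg eps Heps; destruct (Hg eps Heps) as [alp [Halp Hclose]].
  exists alp; split; [easy |]; intros v [_ Hv].
  destruct (Req_dec t v) as [<- | Hne].
  - simpl; unfold Rdist; rewrite Rminus_diag, Rabs_R0; lra.
  - now apply Hclose.
Qed.

Lemma limit1_in_glue f S1 S2 D l t d : 0 < d ->
  (forall v, Rabs (v - t) < d -> S1 v \/ S2 v) ->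
  limit1_in f S1 l t -> limit1_in f S2 l t -> limit1_in f D l t.
Proof.
  intros Hd Hcover H1 H2 eps Heps.
  destruct (H1 eps Heps) as [a1 [Ha1 Hc1]], (H2 eps Heps) as [a2 [Ha2 Hc2]].
  exists (Rmin d (Rmin a1 a2)); split; [now repeat apply Rmin_glb_lt |].
  intros v [_ Hv]; simpl in *; unfold Rdist in *.
  pose proof (Rmin_l d (Rmin a1 a2)); pose proof (Rmin_r d (Rmin a1 a2)).
  pose proof (Rmin_l a1 a2); pose proof (Rmin_r a1 a2).
  destruct (Hcover v ltac:(lra)); [apply Hc1 | apply Hc2]; split; easy || lra.
Qed.

Definition piecewise (b : R) (h1 h2 : R -> R) (x : R) : R :=
  if Rle_dec x b then h1 x else h2 x.

Lemma piecewise_continuous b h1 h2 :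
  (forall x, continuity_pt h1 x) -> (forall x, continuity_pt h2 x) -> h1 b = h2 b ->
  forall x, continuity_pt (piecewise b h1 h2) x.
Proof.
  intros C1 C2 Hb x; unfold piecewise.
  destruct (Rtotal_order x b) as [Hx | [-> | Hx]].
  - apply continuity_pt_locally_ext with h1 (b - x); [lra | | easy].
    intros y Hy; unfold Rdist in Hy; apply Rabs_def2 in Hy.
    destruct (Rle_dec y b); [easy | lra].
  - unfold continuity_pt, continue_in.
    apply limit1_in_glue with (fun y => y <= b) (fun y => b <= y) 1; [lra | intros; lra | |].
    + destruct (Rle_dec b b); [| lra].
      apply limit1_ext with h1; [| now apply continuity_pt_limit1_in].
      intros y Hy; now destruct (Rle_dec y b).
    + destruct (Rle_dec b b); [| lra]; rewrite Hb.
      apply limit1_ext with h2; [| now apply continuity_pt_limit1_in].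
      intros y Hy; destruct (Rle_dec y b); [| easy].
      now replace y with b by lra.
  - apply continuity_pt_locally_ext with h2 (x - b); [lra | | easy].
    intros y Hy; unfold Rdist in Hy; apply Rabs_def2 in Hy.
    destruct (Rle_dec y b); [lra | easy].
Qed.

Lemma rescale_continuous k F t :
  (forall x, continuity_pt F x) -> continuity_pt (rescale k F) t.
Proof.
  intros C; unfold rescale.
  apply continuity_pt_mult; [apply continuity_pt_const; now intros ? ? |].
  apply (continuity_pt_comp (fun v => v / powerRZ 2 k) F); [| apply C].
  apply continuity_pt_mult; [apply derivable_continuous_pt, derivable_pt_id |].
  apply continuity_pt_const; now intros ? ?.
Qed.

Lemma continuous_bounded a b F : a <= b -> (forall x, continuity_pt F x) ->
  exists B, forall x, a <= x <= b -> Rabs (F x) <= B.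
Proof.
  intros Hab C.
  destruct (continuity_ab_maj (fun x => Rabs (F x)) a b Hab) as [m [Hm _]].
  - intros c _; apply (continuity_pt_comp F Rabs); [apply C | apply Rcontinuity_abs].
  - now exists (Rabs (F m)).
Qed.

Lemma blocks_near t : 0 < t -> exists k1 k2 d, 0 < d /\ block k1 t /\ block k2 t /\
  forall v, Rabs (v - t) < d -> block k1 v \/ block k2 v.
Proof.
  intros Ht; pose proof (dyadic_index_spec t Ht) as Hn; set (n := dyadic_index t) in *.
  unfold block; rewrite powerRZ2_succ in *; pose proof (powerRZ2_pos n).
  destruct (Rle_lt_or_eq_dec _ _ (proj1 Hn)) as [Hlt | Heq].
  - exists n, n, (Rmin (t - powerRZ 2 n) (2 * powerRZ 2 n - t)).
    pose proof (Rmin_l (t - powerRZ 2 n) (2 * powerRZ 2 n - t)).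
    pose proof (Rmin_r (t - powerRZ 2 n) (2 * powerRZ 2 n - t)).
    rewrite powerRZ2_succ; split; [apply Rmin_glb_lt; lra |].
    repeat split; try lra; intros v Hv; apply Rabs_def2 in Hv; left; lra.
  - assert (E : powerRZ 2 n = 2 * powerRZ 2 (n - 1)).
    { rewrite <- powerRZ2_succ; f_equal; ring. }
    exists (n - 1)%Z, n, (powerRZ 2 (n - 1)).
    replace (n - 1 + 1)%Z with n by ring; rewrite powerRZ2_succ.
    pose proof (powerRZ2_pos (n - 1)).
    repeat split; try lra; intros v Hv; apply Rabs_def2 in Hv.
    destruct (Rle_dec v t); [left | right]; lra.
Qed.

Lemma dyadic_ext_bound F B : (forall x, 1 <= x <= 2 -> Rabs (F x) <= B) ->
  forall t, 0 <= t -> Rabs (dyadic_ext F t) <= B * t.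
Proof.
  intros HB t Ht.
  assert (B0 : 0 <= B) by (pose proof (HB 1 ltac:(lra)); pose proof (Rabs_pos (F 1)); lra).
  destruct (Rle_lt_or_eq_dec _ _ Ht) as [Hpos | <-].
  2: rewrite dyadic_ext_nonpos, Rabs_R0 by lra; lra.
  rewrite dyadic_ext_pos by easy; unfold rescale.
  pose proof (block_dyadic_index t Hpos) as Hk; set (k := dyadic_index t) in *.
  pose proof (powerRZ2_pos k); pose proof (HB _ (block_div k t Hk)).
  rewrite Rabs_mult, Rabs_right by lra; destruct Hk; nra.
Qed.

Lemma dyadic_ext_cont F : F 2 = 2 * F 1 -> (forall x, continuity_pt F x) ->
  cont_on_nonneg (dyadic_ext F).
Proof.
  intros HF C t Ht.
  destruct (Rle_lt_or_eq_dec _ _ Ht) as [Hpos | <-].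
  - destruct (blocks_near t Hpos) as [k1 [k2 [d [Hd [Hk1 [Hk2 Hcover]]]]]].
    assert (Hon : forall k, block k t -> limit1_in (dyadic_ext F) (block k) (dyadic_ext F t) t).
    { intros k Hk; rewrite (dyadic_ext_block F k t HF Hk).
      apply limit1_ext with (rescale k F).
      - intros v Hv; symmetry; now apply dyadic_ext_block.
      - now apply continuity_pt_limit1_in, rescale_continuous. }
    apply limit1_in_glue with (block k1) (block k2) d; auto.
  - destruct (continuous_bounded 1 2 F ltac:(lra) C) as [B HB].
    rewrite dyadic_ext_nonpos by lra.
    intros eps Heps; exists (eps / (Rabs B + 1)); split.
    { apply Rdiv_lt_0_compat; [easy |]; pose proof (Rabs_pos B); lra. }
    intros x [Hx Hdist]; simpl in *; unfold Rdist in *.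
    rewrite Rminus_0_r in *; rewrite Rabs_right in Hdist by lra.
    pose proof (dyadic_ext_bound F B HB x Hx); pose proof (Rle_abs B).
    pose proof (Rabs_pos B).
    assert (x * (Rabs B + 1) < eps).
    { apply Rmult_lt_reg_r with (/ (Rabs B + 1)); [apply Rinv_0_lt_compat; lra |].
      rewrite Rmult_assoc, Rinv_r by lra; lra. }
    nra.
Qed.

Lemma dyadic_ext_nonneg F : (forall x, 1 <= x <= 2 -> 0 <= F x) ->
  forall t, 0 <= dyadic_ext F t.
Proof.
  intros HF t; destruct (Rle_dec t 0); [rewrite dyadic_ext_nonpos; lra |].
  rewrite dyadic_ext_pos by lra; unfold rescale.
  pose proof (block_dyadic_index t ltac:(lra)) as Hk.
  apply Rmult_le_pos; [apply Rlt_le, powerRZ2_pos | apply HF, block_div, Hk].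
Qed.

Lemma dyadic_ext_lincomb F M1 M2 c1 c2 t :
  dyadic_ext (fun x => F x + (c1 * M1 x + c2 * M2 x)) t
  = dyadic_ext F t + (c1 * dyadic_ext M1 t + c2 * dyadic_ext M2 t).
Proof. unfold dyadic_ext, rescale; destruct (Rle_dec t 0); ring. Qed.

Section Monotone.

Variable M : R -> R.
Hypothesis M_selfsimilar : M 2 = 2 * M 1.
Hypothesis M_1_nonneg : 0 <= M 1.
Hypothesis M_nondecr : forall x y, 1 <= x -> x <= y -> y <= 2 -> M x <= M y.

Lemma dyadic_ext_block_bounds k t : block k t ->
  powerRZ 2 k * M 1 <= dyadic_ext M t <= powerRZ 2 (k + 1) * M 1.
Proof.
  intros Hk; rewrite (dyadic_ext_block M k t M_selfsimilar Hk); unfold rescale.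
  pose proof (block_div k t Hk); pose proof (powerRZ2_pos k).
  replace (powerRZ 2 (k + 1) * M 1) with (powerRZ 2 k * M 2)
    by (rewrite powerRZ2_succ, M_selfsimilar; ring).
  split; apply Rmult_le_compat_l; try lra; apply M_nondecr; lra.
Qed.

Lemma dyadic_ext_nondecr : nondecr_on_nonneg (dyadic_ext M).
Proof.
  intros s t Hs Hst.
  destruct (Rle_lt_or_eq_dec _ _ Hs) as [Hspos | <-].
  - pose proof (dyadic_index_spec s Hspos) as Hks.
    pose proof (dyadic_index_spec t ltac:(lra)) as Hkt.
    set (ks := dyadic_index s) in *; set (kt := dyadic_index t) in *.
    assert (Hle : (ks <= kt)%Z).
    { destruct (Z_le_gt_dec ks kt) as [| Hgt]; [easy |].
      pose proof (powerRZ2_le (kt + 1) ks ltac:(lia)); lra. }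
    destruct (Z.eq_dec ks kt) as [Heq | Hne].
    + rewrite !dyadic_ext_pos by lra; fold ks kt; rewrite <- Heq in Hkt |- *; unfold rescale.
      pose proof (powerRZ2_pos ks).
      pose proof (block_div ks s ltac:(unfold block; lra)).
      pose proof (block_div ks t ltac:(unfold block; lra)).
      apply Rmult_le_compat_l; [lra |]; apply M_nondecr; try lra.
      apply Rmult_le_compat_r; [apply Rlt_le, Rinv_0_lt_compat |]; lra.
    + pose proof (dyadic_ext_block_bounds ks s ltac:(unfold block; lra)).
      pose proof (dyadic_ext_block_bounds kt t ltac:(unfold block; lra)).
      pose proof (powerRZ2_le (ks + 1) kt ltac:(lia)).
      nra.
  - rewrite dyadic_ext_nonpos by lra.
    destruct (Rle_dec t 0); [rewrite dyadic_ext_nonpos; lra |].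
    pose proof (dyadic_ext_block_bounds _ t (block_dyadic_index t ltac:(lra))).
    pose proof (powerRZ2_pos (dyadic_index t)); nra.
Qed.

End Monotone.

Definition locally_constant_within (S : R -> Prop) (h : R -> R) (t : R) : Prop :=
  exists d, 0 < d /\ forall v, S v -> Rabs (v - t) < d -> h v = h t.

Lemma locally_constant_within_interval S h a b t : a < t < b ->
  (forall v, S v -> a < v < b -> h v = h t) -> locally_constant_within S h t.
Proof.
  intros Ht Hab; exists (Rmin (t - a) (b - t)); split; [apply Rmin_glb_lt; lra |].
  intros v Hv Hvt; apply Hab; [easy |]; apply Rabs_def2 in Hvt.
  pose proof (Rmin_l (t - a) (b - t)); pose proof (Rmin_r (t - a) (b - t)); lra.
Qed.

Lemma locally_constant_within_glue S1 S2 D h t d : 0 < d ->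
  (forall v, Rabs (v - t) < d -> S1 v \/ S2 v) ->
  locally_constant_within S1 h t -> locally_constant_within S2 h t ->
  locally_constant_within D h t.
Proof.
  intros Hd Hcover [d1 [Hd1 H1]] [d2 [Hd2 H2]].
  exists (Rmin d (Rmin d1 d2)); split; [now repeat apply Rmin_glb_lt |].
  intros v _ Hv.
  pose proof (Rmin_l d (Rmin d1 d2)); pose proof (Rmin_r d (Rmin d1 d2)).
  pose proof (Rmin_l d1 d2); pose proof (Rmin_r d1 d2).
  destruct (Hcover v ltac:(lra)); [apply H1 | apply H2]; easy || lra.
Qed.

Lemma locally_constant_derivable h t :
  locally_constant_within (fun _ => True) h t -> derivable_pt_lim h t 0.
Proof.
  intros [d [Hd Hc]] eps Heps; exists (mkposreal d Hd); intros e He Hed; simpl in Hed.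
  rewrite Hc by (easy || now replace (t + e - t) with e by ring).
  unfold Rminus; rewrite Rplus_opp_r, Rdiv_0_l, Rplus_opp_r, Rabs_R0; lra.
Qed.

Lemma eq_of_locally_constant h s t : s <= t ->
  (forall u, s <= u <= t -> locally_constant_within (fun _ => True) h u) -> h s = h t.
Proof.
  intros Hst Hloc.
  set (pr := fun u (Hu : s < u < t) =>
    exist _ 0 (locally_constant_derivable h u (Hloc u ltac:(lra))) : derivable_pt h u).
  symmetry; apply (null_derivative_loc h s t pr); [| easy | lra].
  intros u Hu; apply derivable_continuous_pt.
  exists 0; now apply locally_constant_derivable, Hloc.
Qed.

Lemma rescale_locally_constant k M t :
  locally_constant_within (fun x => 1 <= x <= 2) M (t / powerRZ 2 k) ->
  locally_constant_within (block k) (rescale k M) t.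
Proof.
  intros [d [Hd Hc]]; pose proof (powerRZ2_pos k) as Hk.
  exists (powerRZ 2 k * d); split; [nra |].
  intros v Hv Hvt; unfold rescale; f_equal; apply Hc; [now apply block_div |].
  replace (v / powerRZ 2 k - t / powerRZ 2 k) with ((v - t) / powerRZ 2 k) by (field; lra).
  unfold Rdiv; rewrite Rabs_mult, (Rabs_right (/ _)) by (apply Rle_ge, Rlt_le, Rinv_0_lt_compat, Hk).
  apply Rmult_lt_reg_l with (powerRZ 2 k); [easy |].
  rewrite <- Rmult_assoc, (Rmult_comm (powerRZ 2 k)), Rmult_assoc, Rinv_r by lra; lra.
Qed.

Lemma dyadic_ext_increases_only_at_zero G M :
  G 2 = 2 * G 1 -> M 2 = 2 * M 1 ->
  (forall x, 1 <= x <= 2 -> 0 < G x -> locally_constant_within (fun x => 1 <= x <= 2) M x) ->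
  increases_only_at_zero (dyadic_ext G) (dyadic_ext M).
Proof.
  intros HG HM Hcompl s t Hs Hst Hpos.
  apply eq_of_locally_constant; [easy |]; intros u Hu.
  pose proof (Hpos u Hu) as Gu.
  assert (Hu0 : 0 < u).
  { destruct (Rle_dec u 0); [rewrite dyadic_ext_nonpos in Gu; lra | lra]. }
  assert (Hblock : forall k, block k u -> locally_constant_within (block k) (dyadic_ext M) u).
  { intros k Hk; pose proof (powerRZ2_pos k).
    rewrite (dyadic_ext_block G k u HG Hk) in Gu; unfold rescale in Gu.
    destruct (rescale_locally_constant k M u) as [d [Hd Hc]].
    { apply Hcompl; [now apply block_div | nra]. }
    exists d; split; [easy |]; intros v Hv Hvu.
    rewrite !(dyadic_ext_block M k) by easy; now apply Hc. }
  destruct (blocks_near u Hu0) as [k1 [k2 [d [Hd [Hk1 [Hk2 Hcover]]]]]].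
  apply locally_constant_within_glue with (block k1) (block k2) d; auto.
Qed.

Lemma lincomb_continuous F M1 M2 c1 c2 :
  (forall x, continuity_pt F x) -> (forall x, continuity_pt M1 x) ->
  (forall x, continuity_pt M2 x) ->
  forall x, continuity_pt (fun x => F x + (c1 * M1 x + c2 * M2 x)) x.
Proof.
  intros CF C1 C2 x.
  apply continuity_pt_plus; [easy |].
  apply continuity_pt_plus; apply continuity_pt_mult; try easy;
    apply continuity_pt_const; now intros ? ?.
Qed.

Lemma dyadic_ext_driving F1 F2 :
  F1 2 = 2 * F1 1 -> F2 2 = 2 * F2 1 ->
  (forall x, continuity_pt F1 x) -> (forall x, continuity_pt F2 x) ->
  driving (dyadic_ext F1) (dyadic_ext F2).
Proof.
  intros H1 H2 C1 C2; repeat split; try now apply dyadic_ext_cont.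
  all: rewrite dyadic_ext_nonpos; lra.
Qed.

Section BlockSolution.

Variables r11 r12 r21 r22 : R.
Variables F1 F2 M1 M2 : R -> R.

Hypothesis F1_cont : forall x, continuity_pt F1 x.
Hypothesis F2_cont : forall x, continuity_pt F2 x.
Hypothesis M1_cont : forall x, continuity_pt M1 x.
Hypothesis M2_cont : forall x, continuity_pt M2 x.
Hypothesis F1_selfsimilar : F1 2 = 2 * F1 1.
Hypothesis F2_selfsimilar : F2 2 = 2 * F2 1.
Hypothesis M1_selfsimilar : M1 2 = 2 * M1 1.
Hypothesis M2_selfsimilar : M2 2 = 2 * M2 1.
Hypothesis M1_1_nonneg : 0 <= M1 1.
Hypothesis M2_1_nonneg : 0 <= M2 1.
Hypothesis M1_nondecr : forall x y, 1 <= x -> x <= y -> y <= 2 -> M1 x <= M1 y.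
Hypothesis M2_nondecr : forall x y, 1 <= x -> x <= y -> y <= 2 -> M2 x <= M2 y.
Hypothesis G1_nonneg : forall x, 1 <= x <= 2 -> 0 <= F1 x + (r11 * M1 x + r12 * M2 x).
Hypothesis G2_nonneg : forall x, 1 <= x <= 2 -> 0 <= F2 x + (r21 * M1 x + r22 * M2 x).
Hypothesis G1_compl : forall x, 1 <= x <= 2 -> 0 < F1 x + (r11 * M1 x + r12 * M2 x) ->
  locally_constant_within (fun x => 1 <= x <= 2) M1 x.
Hypothesis G2_compl : forall x, 1 <= x <= 2 -> 0 < F2 x + (r21 * M1 x + r22 * M2 x) ->
  locally_constant_within (fun x => 1 <= x <= 2) M2 x.

Lemma dyadic_ext_skorokhod_solution :
  skorokhod_solution r11 r12 r21 r22 (dyadic_ext F1) (dyadic_ext F2)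
    (dyadic_ext (fun x => F1 x + (r11 * M1 x + r12 * M2 x)))
    (dyadic_ext (fun x => F2 x + (r21 * M1 x + r22 * M2 x)))
    (dyadic_ext M1) (dyadic_ext M2).
Proof.
  assert (G1_selfsimilar : F1 2 + (r11 * M1 2 + r12 * M2 2)
                           = 2 * (F1 1 + (r11 * M1 1 + r12 * M2 1))).
  { rewrite F1_selfsimilar, M1_selfsimilar, M2_selfsimilar; ring. }
  assert (G2_selfsimilar : F2 2 + (r21 * M1 2 + r22 * M2 2)
                           = 2 * (F2 1 + (r21 * M1 1 + r22 * M2 1))).
  { rewrite F2_selfsimilar, M1_selfsimilar, M2_selfsimilar; ring. }
  repeat split.
  - now apply dyadic_ext_cont, lincomb_continuous.
  - now apply dyadic_ext_cont, lincomb_continuous.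
  - now apply dyadic_ext_nonneg.
  - now apply dyadic_ext_nonneg.
  - now apply dyadic_ext_cont.
  - now apply dyadic_ext_cont.
  - apply dyadic_ext_nonpos; lra.
  - apply dyadic_ext_nonpos; lra.
  - now apply dyadic_ext_nondecr.
  - now apply dyadic_ext_nondecr.
  - apply dyadic_ext_lincomb.
  - apply dyadic_ext_lincomb.
  - now apply dyadic_ext_increases_only_at_zero.
  - now apply dyadic_ext_increases_only_at_zero.
Qed.

End BlockSolution.

(* Profiles on [1, 2]; their values outside [1, 2] never enter [dyadic_ext]. *)
Definition F1 := piecewise (5/4) (fun x => -3/2 + 4 * (x - 1))
  (piecewise (3/2) (fun x => -1/2 - 8 * (x - 5/4))
  (piecewise (7/4) (fun x => -5/2 + 8 * (x - 3/2)) (fun x => -1/2 - 10 * (x - 7/4)))).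
Definition F2 := piecewise (5/4) (fun x => -3 - 4 * (x - 1))
  (piecewise (3/2) (fun x => -4)
  (piecewise (7/4) (fun x => -4 - 8 * (x - 3/2)) (fun x => -6))).

Definition M1 := piecewise (21/16) (fun x => 3)
  (piecewise (3/2) (fun x => 3 + 8 * (x - 21/16))
  (piecewise (37/20) (fun x => 9/2) (fun x => 9/2 + 10 * (x - 37/20)))).
Definition M2 := piecewise (19/16) (fun x => 3/4)
  (piecewise (5/4) (fun x => 3/4 + 4 * (x - 19/16))
  (piecewise (27/16) (fun x => 1)
  (piecewise (7/4) (fun x => 1 + 8 * (x - 27/16)) (fun x => 3/2)))).

Definition Mb1 := piecewise (9/8) (fun x => 8/3)
  (piecewise (5/4) (fun x => 8/3 + 4/3 * (x - 9/8))
  (piecewise (3/2) (fun x => 17/6 + 8 * (x - 5/4))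
  (piecewise (39/20) (fun x => 29/6) (fun x => 29/6 + 10 * (x - 39/20))))).
Definition Mb2 := piecewise (17/16) (fun x => 7/12)
  (piecewise (9/8) (fun x => 7/12 + 4 * (x - 17/16))
  (piecewise (5/4) (fun x => 5/6 + 8/3 * (x - 9/8)) (fun x => 7/6))).

Ltac piecewise_lra :=
  unfold F1, F2, M1, M2, Mb1, Mb2, piecewise in *;
  repeat lazymatch goal with
  | |- context [Rle_dec ?a ?b] => destruct (Rle_dec a b)
  | H : context [Rle_dec ?a ?b] |- _ => destruct (Rle_dec a b)
  end; lra.

Ltac solve_piecewise_continuity :=
  intro; repeat (apply piecewise_continuous; [intro; reg | | unfold piecewise;
    repeat destruct (Rle_dec _ _); lra]); intro; reg.

Ltac constant_on a b :=
  apply locally_constant_within_interval with a b; [lra | intros; piecewise_lra].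

Lemma F1_continuous : forall x, continuity_pt F1 x. Proof. unfold F1; solve_piecewise_continuity. Qed.
Lemma F2_continuous : forall x, continuity_pt F2 x. Proof. unfold F2; solve_piecewise_continuity. Qed.
Lemma M1_continuous : forall x, continuity_pt M1 x. Proof. unfold M1; solve_piecewise_continuity. Qed.
Lemma M2_continuous : forall x, continuity_pt M2 x. Proof. unfold M2; solve_piecewise_continuity. Qed.
Lemma Mb1_continuous : forall x, continuity_pt Mb1 x. Proof. unfold Mb1; solve_piecewise_continuity. Qed.
Lemma Mb2_continuous : forall x, continuity_pt Mb2 x. Proof. unfold Mb2; solve_piecewise_continuity. Qed.

Lemma driving_F : driving (dyadic_ext F1) (dyadic_ext F2).
Proof.
  apply dyadic_ext_driving; try piecewise_lra.
  - exact F1_continuous.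
  - exact F2_continuous.
Qed.

Lemma solution_M :
  skorokhod_solution 1 (-2) 1 1 (dyadic_ext F1) (dyadic_ext F2)
    (dyadic_ext (fun x => F1 x + (1 * M1 x + -2 * M2 x)))
    (dyadic_ext (fun x => F2 x + (1 * M1 x + 1 * M2 x)))
    (dyadic_ext M1) (dyadic_ext M2).
Proof.
  apply dyadic_ext_skorokhod_solution;
    auto using F1_continuous, F2_continuous, M1_continuous, M2_continuous;
    try (intros; piecewise_lra).
  - intros x Hx Hpos.
    destruct (Rlt_le_dec x (21/16)); [constant_on 0 (21/16) |].
    destruct (Rle_lt_dec x (3/2)); [exfalso; piecewise_lra |].
    destruct (Rlt_le_dec x (37/20)); [constant_on (3/2) (37/20) | exfalso; piecewise_lra].
  - intros x Hx Hpos.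
    destruct (Rlt_le_dec x (19/16)); [constant_on 0 (19/16) |].
    destruct (Rle_lt_dec x (5/4)); [exfalso; piecewise_lra |].
    destruct (Rlt_le_dec x (27/16)); [constant_on (5/4) (27/16) |].
    destruct (Rle_dec x (7/4)); [exfalso; piecewise_lra | constant_on (7/4) 3].
Qed.

Lemma solution_Mb :
  skorokhod_solution 1 (-2) 1 1 (dyadic_ext F1) (dyadic_ext F2)
    (dyadic_ext (fun x => F1 x + (1 * Mb1 x + -2 * Mb2 x)))
    (dyadic_ext (fun x => F2 x + (1 * Mb1 x + 1 * Mb2 x)))
    (dyadic_ext Mb1) (dyadic_ext Mb2).
Proof.
  apply dyadic_ext_skorokhod_solution;
    auto using F1_continuous, F2_continuous, Mb1_continuous, Mb2_continuous;
    try (intros; piecewise_lra).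
  - intros x Hx Hpos.
    destruct (Rlt_le_dec x (9/8)); [constant_on 0 (9/8) |].
    destruct (Rle_lt_dec x (3/2)); [exfalso; piecewise_lra |].
    destruct (Rlt_le_dec x (39/20)); [constant_on (3/2) (39/20) | exfalso; piecewise_lra].
  - intros x Hx Hpos.
    destruct (Rlt_le_dec x (17/16)); [constant_on 0 (17/16) |].
    destruct (Rle_dec x (5/4)); [exfalso; piecewise_lra | constant_on (5/4) 3].
Qed.

Theorem theorem2p1 :
  exists f1 f2 : R -> R,
    driving f1 f2 /\
    exists g1 g2 m1 m2 gb1 gb2 mb1 mb2 : R -> R,
      skorokhod_solution 1 (-2) 1 1 f1 f2 g1 g2 m1 m2 /\
      skorokhod_solution 1 (-2) 1 1 f1 f2 gb1 gb2 mb1 mb2 /\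
      exists t, 0 <= t /\ (g1 t <> gb1 t \/ g2 t <> gb2 t).
Proof.
  exists (dyadic_ext F1), (dyadic_ext F2); split; [exact driving_F |].
  eexists _, _, _, _, _, _, _, _; split; [exact solution_M |]; split; [exact solution_Mb |].
  exists 1; split; [lra | right].
  rewrite !dyadic_ext_extends by (lra || piecewise_lra).
  piecewise_lra.
Qed.
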